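(* Let $L:\mathbb{R}^d\to\mathbb{R}^{\mathcal{Y}}_+$ be a polyhedral loss, $\ell:\mathcal{R}\to\mathbb{R}^{\mathcal{Y}}_+$ a discrete loss, $\|\cdot\|$ a norm on $\mathbb{R}^d$, and $\psi:\mathbb{R}^d\to\mathcal{R}$ a link. Then $(L,\psi)$ is calibrated with respect to $\ell$ if and only if there exists $\epsilon>0$ such that $\psi$ is produced by the general $\epsilon$-thickened link construction for $L$, $\mathrm{prop}[\ell]$, $\epsilon$, $\|\cdot\|$.
   Context: $\mathcal{Y}$ is a finite label set, $\Delta_{\mathcal{Y}}$ the simplex, $\mathbb{R}^{\mathcal{Y}}_+$ the nonnegative orthant. A loss $L:\mathcal{R}\to\mathbb{R}^{\mathcal{Y}}_+$ is discrete if $\mathcal{R}$ is finite; $L:\mathbb{R}^d\to\mathbb{R}^{\mathcal{Y}}_+$ is polyhedral if each coordinate is a max of finitely many affine functions. For losses whose expected loss $\langle p,L(\cdot)\rangle$ attains its minimum for each $p$ (true for polyhedral and discrete losses), $\mathrm{prop}[L](p)=\arg\min_r\langle p,L(r)\rangle$, with level sets $\mathrm{prop}[L]_r=\{p:r\in\mathrm{prop}[L](p)\}$. $L$ indirectly elicits $\gamma$ if for all $u$ there is $r$ with $\mathrm{prop}[L]_u\subseteq\gamma_r$. Calibration: for all $p$, $\inf_{u:\psi(u)\notin\mathrm{prop}[\ell](p)}\langle p,L(u)\rangle>\inf_u\langle p,L(u)\rangle$. General $\epsilon$-thickened link construction for a polyhedral $L$, a finite property $\gamma:\Delta_{\mathcal{Y}}\rightrightarrows\mathcal{R}$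 indirectly elicited by $L$, $\epsilon>0$ and a norm $\|\cdot\|$: let $\Gamma=\mathrm{prop}[L]$, $\mathcal{U}=\{\Gamma(p):p\in\Delta_{\mathcal{Y}}\}$, $\Gamma_U=\{p:\Gamma(p)=U\}$ and $R_U=\{r\in\mathcal{R}:\Gamma_U\subseteq\gamma_r\}$ for $U\in\mathcal{U}$. Initialize $\Psi(u)=\mathcal{R}$ for all $u$; for each $U\in\mathcal{U}$ and each $u$ with $\inf_{u^*\in U}\|u^*-u\|<\epsilon$ set $\Psi(u)\leftarrow\Psi(u)\cap R_U$. If $\Psi(u)\neq\emptyset$ for all $u$, the construction produces exactly the links $\psi$ with $\psi(u)\in\Psi(u)$ for all $u$. *)

From HB Require Import structures.
From mathcomp Require Import all_boot all_order all_algebra.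
From mathcomp Require Import all_classical all_reals all_analysis.
Set Implicit Arguments. Unset Strict Implicit. Unset Printing Implicit Defensive.
Import Order.TTheory GRing.Theory Num.Theory.
Local Open Scope classical_set_scope.
Local Open Scope ring_scope.

Section Defs.
Variables (R : realType) (Y : finType).

Definition simplex : set (Y -> R) :=
  [set p | (forall y, 0 <= p y) /\ \sum_(y : Y) p y = 1].

Definition exp_loss (Rep : Type) (L : Rep -> Y -> R) (p : Y -> R) (r : Rep) : R :=
  \sum_(y : Y) p y * L r y.

Definition prop (Rep : Type) (L : Rep -> Y -> R) (p : Y -> R) : set Rep :=
  [set r | forall r', exp_loss L p r <= exp_loss L p r'].

Definition level_set (Rep : Type) (gamma : (Y -> R) -> set Rep) (r : Rep)
  : set (Y -> R) := [set p | simplex p /\ gamma p r].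

(* Discrete loss: finite report set (a finType) and values in R^Y_+. *)
Definition discrete_loss (Rep : finType) (l : Rep -> Y -> R) : Prop :=
  forall r y, 0 <= l r y.

Definition affine (d : nat) (ab : 'rV[R]_d * R) (u : 'rV[R]_d) : R :=
  \sum_(i < d) ab.1 0 i * u 0 i + ab.2.

Definition polyhedral (d : nat) (L : 'rV[R]_d -> Y -> R) : Prop :=
  (forall u y, 0 <= L u y) /\
  forall y, exists s : seq ('rV[R]_d * R), s != [::] /\
    forall u, (forall ab, ab \in s -> affine ab u <= L u y) /\
              (exists2 ab, ab \in s & affine ab u = L u y).

Definition is_norm (d : nat) (nrm : 'rV[R]_d -> R) : Prop :=
  (forall u, 0 <= nrm u) /\ (forall u, nrm u = 0 -> u = 0) /\
  (forall (c : R) u, nrm (c *: u) = `|c| * nrm u) /\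
  (forall u v, nrm (u + v) <= nrm u + nrm v).

Definition indirectly_elicits (d : nat) (L : 'rV[R]_d -> Y -> R)
  (Rep : Type) (gamma : (Y -> R) -> set Rep) : Prop :=
  forall u, exists r, level_set (prop L) u `<=` level_set gamma r.

(* Calibration of (L, psi) w.r.t. l. Infima are taken in the extended reals
   (the infimum over the empty set is +oo). *)
Definition calibrated (d : nat) (L : 'rV[R]_d -> Y -> R) (Rep : Type)
  (l : Rep -> Y -> R) (psi : 'rV[R]_d -> Rep) : Prop :=
  forall p, simplex p ->
    (ereal_inf [set (exp_loss L p u)%:E | u in [set u | ~ prop l p (psi u)]]
     > ereal_inf [set (exp_loss L p u)%:E | u in [set: 'rV[R]_d]])%E.

Section Construction.
Variables (d : nat) (L : 'rV[R]_d -> Y -> R) (Rep : Type)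
  (gamma : (Y -> R) -> set Rep) (eps : R) (nrm : 'rV[R]_d -> R).

Definition Gam (p : Y -> R) : set 'rV[R]_d := prop L p.
Definition Ucal : set (set 'rV[R]_d) := [set Gam p | p in simplex].
Definition Gam_U (U : set 'rV[R]_d) : set (Y -> R) :=
  [set p | simplex p /\ Gam p = U].
Definition R_U (U : set 'rV[R]_d) : set Rep :=
  [set r | Gam_U U `<=` level_set gamma r].
Definition Psi (u : 'rV[R]_d) : set Rep :=
  [set r | forall U, Ucal U ->
     (ereal_inf [set (nrm (ustar - u))%:E | ustar in U] < eps%:E)%E ->
     R_U U r].

(* psi is produced by the construction (which presupposes that gamma is
   indirectly elicited by L): psi(u) ∈ Ψ(u) for all u (this forces Ψ(u) ≠ ∅). *)
Definition thickened_link (psi : 'rV[R]_d -> Rep) : Prop :=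
  indirectly_elicits L gamma /\ (forall u, Psi u (psi u)).
End Construction.

End Defs.

From HB Require Import structures.
From mathcomp Require Import all_boot all_order all_algebra.
From mathcomp Require Import all_classical all_reals all_analysis.
From mathcomp Require Import ring lra zify.
Import Order.TTheory GRing.Theory Num.Theory.
Import numFieldNormedType.Exports.
Local Open Scope classical_set_scope.
Local Open Scope ring_scope.
Set Implicit Arguments. Unset Strict Implicit. Unset Printing Implicit Defensive.

(* The expected loss [F_p := exp_loss L p] is the maximum of finitely many affine
   pieces, and [F_p - min F_p] is bounded below by a multiple of the distance to the
   argmin [Gam p].  If [psi] comes from the eps-thickened construction, a report whose
   link is wrong for [p] is at distance >= eps from [Gam p], so its expected loss exceeds
   [min F_p] by a fixed margin: this is calibration.  Conversely, each [Gam p] is a union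
   of classes of the activity pattern of the pieces of [L], so there are finitely many
   optimal sets; calibration and the Lipschitz continuity of [F_p] give, for each optimal
   set and each report it rules out, a radius within which [psi] avoids that report, and
   the least of these radii is a valid eps. *)

Section FinitePositiveBounds.
Variable R : realType.

Lemma fin_pos_lb (T : finType) (f : T -> R) :
  (forall t, 0 < f t) -> exists2 e : R, 0 < e & forall t, e <= f t.
Proof.
move=> f_gt0; case: (pickP T) => [t0 _|T0]; last by exists 1 => // t; have := T0 t.
by case: (arg_minP f (isT : predT t0)) => t _ min_t; exists (f t) => // s; exact: min_t.
Qed.

Lemma fin_uniform_pos (T : finType) (P : T -> R -> Prop) :
  (forall t e e', 0 < e' <= e -> P t e -> P t e') ->
  (forall t, exists2 e, 0 < e & P t e) -> exists2 e, 0 < e & forall t, P t e.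
Proof.
move=> P_anti P_ex.
have /choice [e He] : forall t, exists e, 0 < e /\ P t e.
  by move=> t; have [e] := P_ex t; exists e.
have [e0 e0_gt0 e0_le] := fin_pos_lb (fun t => (He t).1).
by exists e0 => // t; apply: (P_anti t (e t)); [rewrite e0_gt0 e0_le | exact: (He t).2].
Qed.

End FinitePositiveBounds.

Section Dot.
Variables (R : realType) (d : nat).
Implicit Types (a u v : 'rV[R]_d).

Definition dot a u : R := \sum_(i < d) a 0 i * u 0 i.

Lemma affineE (ab : 'rV[R]_d * R) u : affine ab u = dot ab.1 u + ab.2.
Proof. by []. Qed.

Lemma dotD a u v : dot a (u + v) = dot a u + dot a v.
Proof. by rewrite /dot -big_split; apply: eq_bigr => i _; rewrite mxE mulrDr. Qed.

Lemma dotZ a u c : dot a (c *: u) = c * dot a u.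
Proof. by rewrite /dot mulr_sumr; apply: eq_bigr => i _; rewrite mxE mulrCA. Qed.

Lemma dotN a u : dot a (- u) = - dot a u.
Proof. by rewrite -scaleN1r dotZ mulN1r. Qed.

Lemma dotB a u v : dot a (u - v) = dot a u - dot a v.
Proof. by rewrite dotD dotN. Qed.

Lemma dotZl a u c : dot (c *: a) u = c * dot a u.
Proof. by rewrite /dot mulr_sumr; apply: eq_bigr => i _; rewrite mxE mulrA. Qed.

Lemma dot_suml (I : finType) (a : I -> 'rV[R]_d) u :
  dot (\sum_i a i) u = \sum_i dot (a i) u.
Proof.
by rewrite /dot exchange_big; apply: eq_bigr => i _; rewrite summxE mulr_suml.
Qed.

Lemma affineD (ab : 'rV[R]_d * R) u v : affine ab (u + v) = affine ab u + dot ab.1 v.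
Proof. by rewrite !affineE dotD addrAC. Qed.

Lemma affineB (ab : 'rV[R]_d * R) u v : affine ab u - affine ab v = dot ab.1 (u - v).
Proof. by rewrite !affineE dotB; lra. Qed.

Lemma normr_entry_le u i : `|u 0 i| <= `|u|.
Proof.
rewrite (_ : `|u| = mx_norm u) // mx_normrE; apply/bigmax_geP; right.
by exists (ord0, i).
Qed.

Definition l1norm a : R := \sum_i `|a 0 i|.

Lemma l1norm_ge0 a : 0 <= l1norm a.
Proof. exact: sumr_ge0. Qed.

Lemma normr_dot_le a u : `|dot a u| <= l1norm a * `|u|.
Proof.
rewrite /dot /l1norm mulr_suml; apply: le_trans (ler_norm_sum _ _ _) _.
by apply: ler_sum => i _; rewrite normrM ler_wpM2l // normr_entry_le.
Qed.

End Dot.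

Section RowTopology.
Variables (R : realType) (d : nat).
Implicit Types (u v : 'rV[R]_d) (A : set 'rV[R]_d).

Lemma lipschitz_continuous (f : 'rV[R]_d -> R) C : 0 <= C ->
  (forall u v, f u - f v <= C * `|u - v|) -> continuous f.
Proof.
move=> C_ge0 f_lip u; apply/cvgrPdist_lt => [|e e_gt0]; first exact: nbhs_filter.
have eC_gt0 : 0 < e / (C + 1) by rewrite divr_gt0 // ltr_wpDl.
have : \forall v \near u, `|u - v| < e / (C + 1).
  exact: (@cvgr_dist_lt _ _ _ (nbhs u) _ id u (@cvg_id _ (nbhs u))).
apply: filterS => v uv.
have fuv : `|f u - f v| <= C * `|u - v|.
  by rewrite ler_norml f_lip andbT lerNl opprB distrC f_lip.
apply: le_lt_trans fuv _; apply: (@le_lt_trans _ _ (C * (e / (C + 1)))).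
  by rewrite ler_wpM2l // ltW.
by rewrite mulrCA gtr_pMr // ltr_pdivrMr ?ltr_wpDl //; lra.
Qed.

Lemma normB_continuous u : continuous (fun v => `|u - v|).
Proof.
apply: (@lipschitz_continuous _ 1) => // v w; rewrite mul1r.
by apply: le_trans (lerB_dist _ _) _; rewrite opprB addrC addrA subrK distrC.
Qed.

Lemma closed_fun_le (g : 'rV[R]_d -> R) c : continuous g -> closed [set u | g u <= c].
Proof.
by move=> g_cont; apply: (@preimage_closed _ _ _ [set y | y <= c]) => [u _|];
  [exact: g_cont | exact: closed_le].
Qed.

Lemma closed_fun_ge (g : 'rV[R]_d -> R) c : continuous g -> closed [set u | c <= g u].
Proof.
by move=> g_cont; apply: (@preimage_closed _ _ _ [set y | c <= y]) => [u _|];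
  [exact: g_cont | exact: closed_ge].
Qed.

Lemma closed_fun_eq (g : 'rV[R]_d -> R) c : continuous g -> closed [set u | g u = c].
Proof.
by move=> g_cont; apply: (@preimage_closed _ _ _ [set y | y = c]) => [u _|];
  [exact: g_cont | exact: closed_eq].
Qed.

Lemma bounded_closed_compact_le A B : closed A -> (forall u, A u -> `|u| <= B) -> compact A.
Proof.
move=> A_closed A_le; apply: bounded_closed_compact => //.
exists B; split; first exact: num_real.
by move=> M BM u Au; apply: le_trans (A_le u Au) (ltW BM).
Qed.

Lemma compact_pos_lb A (h : 'rV[R]_d -> R) B :
  closed A -> (forall u, A u -> `|u| <= B) -> continuous h ->
  (forall u, A u -> 0 < h u) -> exists2 c, 0 < c & forall u, A u -> c <= h u.
Proof.
move=> A_closed A_le h_cont h_gt0.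
have [[u0 Au0]|A0] := pselect (A !=set0); last by exists 1 => // u Au; case: A0; exists u.
have [u Au min_u] := EVT_min_rV (ex_intro _ u0 Au0)
  (bounded_closed_compact_le A_closed A_le) (continuous_subspaceT h_cont).
rewrite inE in Au; exists (h u); first exact: h_gt0.
by move=> v Av; apply: min_u; rewrite inE.
Qed.

Lemma closed_nearest A u : closed A -> A !=set0 ->
  exists2 w, A w & forall w', A w' -> `|u - w| <= `|u - w'|.
Proof.
move=> A_closed [w0 Aw0].
pose A0 := A `&` [set w | `|u - w| <= `|u - w0|].
have A0_closed : closed A0 by apply: closedI => //; exact/closed_fun_le/normB_continuous.
have A0_le w : A0 w -> `|w| <= `|u| + `|u - w0|.
  move=> [_ uw]; apply: le_trans (lerD (lexx `|u|) uw).
  by apply: le_trans (ler_normB _ _); rewrite opprB addrC subrK.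
have [w A0w min_w] := EVT_min_rV (ex_intro _ w0 (conj Aw0 (lexx _)))
  (bounded_closed_compact_le A0_closed A0_le) (continuous_subspaceT (@normB_continuous u)).
rewrite inE in A0w; case: A0w => Aw uw; exists w => // w' Aw'.
have [uw'|uw'] := leP `|u - w'| `|u - w0|; first by apply: min_w; rewrite inE.
exact: le_trans uw (ltW uw').
Qed.

End RowTopology.

Section MaxAffine.
Variables (R : realType) (d : nat) (K : finType) (ab : K -> 'rV[R]_d * R)
  (F : 'rV[R]_d -> R).
Hypotheses (F_ge : forall k u, affine (ab k) u <= F u)
  (F_ex : forall u, exists k, affine (ab k) u = F u).
Implicit Types (u v w z : 'rV[R]_d) (A : {set K}).

Local Notation a k := (ab k).1.

Definition act u : {set K} := [set k | affine (ab k) u == F u].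

Lemma act_nonempty u : exists k, k \in act u.
Proof. by have [k Fk] := F_ex u; exists k; rewrite inE Fk. Qed.

Definition lip_const : R := \sum_k l1norm (a k).

Lemma lip_const_ge0 : 0 <= lip_const.
Proof. by apply: sumr_ge0 => k _; exact: l1norm_ge0. Qed.

Lemma normr_dot_le_lip k u : `|dot (a k) u| <= lip_const * `|u|.
Proof.
apply: le_trans (normr_dot_le _ _) _; rewrite ler_wpM2r // /lip_const.
by rewrite (bigD1 k) //= lerDl; apply: sumr_ge0 => j _; exact: l1norm_ge0.
Qed.

Lemma max_affine_lipschitz u v : F u - F v <= lip_const * `|u - v|.
Proof.
have [k <-] := F_ex u; have := F_ge k v; rewrite -[affine _ u](subrK (affine (ab k) v)).
rewrite affineB; have := ler_norm (dot (a k) (u - v)).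
by have := normr_dot_le_lip k (u - v); lra.
Qed.

Lemma max_affine_continuous : continuous F.
Proof. exact: lipschitz_continuous lip_const_ge0 max_affine_lipschitz. Qed.

(* An inactive piece lies a positive gap below the Lipschitz function [F], hence stays
   below it within a radius proportional to that gap. *)
Lemma act_sub_near u : exists2 e, 0 < e & forall v, `|v - u| < e -> act v \subset act u.
Proof.
pose P k e := k \notin act u -> forall v, `|v - u| < e -> k \notin act v.
have [|k|e e_gt0 Pe] := @fin_uniform_pos _ _ P.
- by move=> k e e' /andP[_ e'e] Pk ku v uv; apply: Pk => //; exact: lt_le_trans e'e.
- have [ku|ku] := boolP (k \in act u); first by exists 1 => //; rewrite /P ku.
  have gap_gt0 : 0 < F u - affine (ab k) u.
    by rewrite inE in ku; rewrite subr_gt0 lt_neqAle ku F_ge.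
  have L1_gt0 : 0 < 2 * lip_const + 1 by rewrite ltr_wpDl // mulr_ge0 // lip_const_ge0.
  exists ((F u - affine (ab k) u) / (2 * lip_const + 1)); first exact: divr_gt0.
  move=> _ v; rewrite ltr_pdivlMr // => uv; rewrite inE lt_eqF //.
  have := max_affine_lipschitz u v; rewrite distrC -[affine _ v](subrK (affine (ab k) u)).
  rewrite affineB; have := ler_norm (dot (a k) (v - u)); have := normr_dot_le_lip k (v - u).
  have := lip_const_ge0; nra.
- exists e => // v uv; apply/fintype.subsetP => k; apply: contraLR => ku; exact: Pe.
Qed.

Lemma max_affine_near u z : exists2 t, 0 < t & forall s, 0 <= s <= t ->
  exists2 k, k \in act u & F (u + s *: z) = F u + s * dot (a k) z.
Proof.
have [e e_gt0 near_u] := act_sub_near u.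
have z1_gt0 : 0 < `|z| + 1 by rewrite ltr_wpDl.
exists (e / (`|z| + 1)) => [|s /andP[s_ge0 s_le]]; first exact: divr_gt0.
have [k kv] := act_nonempty (u + s *: z).
have ku : k \in act u.
  apply: (fintype.subsetP (near_u _ _)) kv; rewrite addrC addKr normrZ ger0_norm //.
  apply: le_lt_trans (ler_wpM2r (normr_ge0 z) s_le) _.
  by rewrite mulrAC ltr_pdivrMr // ltr_pM2l //; lra.
exists k => //; move: kv ku; rewrite !inE => /eqP <- /eqP <-.
by rewrite affineD dotZ.
Qed.

Lemma act_eq_extrapolate u u' : act u = act u' -> exists2 t, 0 < t &
  forall s, 0 <= s <= t -> F (u + s *: (u - u')) = F u + s * (F u - F u').
Proof.
move=> uu'; have [t t_gt0 near_u] := max_affine_near u (u - u').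
exists t => // s st; have [k ku ->] := near_u s st; rewrite -affineB.
have ku' : k \in act u' by rewrite -uu'.
by move: ku ku'; rewrite !inE => /eqP -> /eqP ->.
Qed.

Lemma act_cone_descent w z : (forall k, k \in act w -> dot (a k) z <= 0) ->
  exists2 t, 0 < t <= 1 & F (w + t *: z) <= F w.
Proof.
move=> z_cone; have [t t_gt0 near_w] := max_affine_near w z.
have mt_gt0 : 0 < Num.min t 1 by rewrite lt_min t_gt0 ltr01.
exists (Num.min t 1); first by rewrite mt_gt0 ge_min lexx orbT.
have [|k kw ->] := near_w (Num.min t 1); first by rewrite ltW // ge_min lexx.
by rewrite gerDl; apply: mulr_ge0_le0; [exact: ltW | exact: z_cone].
Qed.

Section BoundedBelow.
Variable b : R.
Hypothesis F_lb : forall u, b <= F u.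

Lemma exists_slope_ge0 z : exists k, 0 <= dot (a k) z.
Proof.
apply/not_existsP => slopes_lt0.
have [e e_gt0 slope_le] : exists2 e, 0 < e & forall k, e <= - dot (a k) z.
  by apply: fin_pos_lb => k; rewrite oppr_gt0 ltNge; apply/negP/slopes_lt0.
pose t := (F 0 - b + 1) / e.
have [k Fk] := F_ex (t *: z); have := F_lb (t *: z); rewrite -Fk -[t *: z]add0r affineD dotZ.
have t_ge0 : 0 <= t by rewrite divr_ge0 ?ltW // ltr_wpDl // subr_ge0.
have te : t * e = F 0 - b + 1 by rewrite divfK ?gt_eqF.
have := ler_wpM2l t_ge0 (slope_le k); have := F_ge k 0; lra.
Qed.

Definition stationary A := forall z k0, k0 \in A ->
  (forall k, k \in A -> dot (a k) z = dot (a k0) z) -> 0 <= dot (a k0) z.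

Lemma act_grow u : ~ stationary (act u) ->
  exists2 u', F u' <= F u & act u \proper act u'.
Proof.
rewrite /stationary => /existsNP[z /existsNP[k0 /not_implyP[k0u /not_implyP[tied /negP]]]].
rewrite -ltNge; set r := dot (a k0) z => r_lt0.
pose steeper j := r < dot (a j) z.
pose f j := (F u - affine (ab j) u) / (dot (a j) z - r).
have [j0 j0_ge0] := exists_slope_ge0 z.
have [j sj min_j] := arg_minP f (lt_le_trans r_lt0 j0_ge0 : steeper j0).
have gap_gt0 i : steeper i -> 0 < dot (a i) z - r by rewrite subr_gt0.
have t_ge0 : 0 <= f j by rewrite divr_ge0 ?subr_ge0 ?F_ge // ltW // gap_gt0.
(* The step [f j] is exactly the first time a steeper piece catches up with [F]. *)
have Fv : F (u + f j *: z) = F u + f j * r.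
  apply/eqP; rewrite eq_le; apply/andP; split; last first.
    by move: k0u; rewrite inE => /eqP <-; rewrite -dotZ -affineD F_ge.
  have [k <-] := F_ex (u + f j *: z); rewrite affineD dotZ.
  have [sk|sk] := boolP (steeper k).
    have := min_j k sk; rewrite /f ler_pdivlMr ?gap_gt0 // => fjk.
    by have := F_ge k u; nra.
  by rewrite lerD ?F_ge // ler_wpM2l // leNgt.
exists (u + f j *: z); first by rewrite Fv gerDl mulr_ge0_le0 // ltW.
apply/properP; split.
  apply/fintype.subsetP => k ku; rewrite inE affineD dotZ tied // Fv.
  by move: ku; rewrite inE => /eqP ->.
exists j; last first.
  by apply/negP => ju; move: sj; rewrite /steeper tied // ltxx.
rewrite inE affineD dotZ Fv; apply/eqP.
have := divfK (lt0r_neq0 (gap_gt0 j sj)) (F u - affine (ab j) u); rewrite -/(f j); lra.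
Qed.

Lemma exists_stationary_below u : exists2 u', F u' <= F u & stationary (act u').
Proof.
have [n] : exists n, (#|K| - #|act u| < n)%N by exists (#|K| - #|act u|).+1.
elim: n u => // n IH u un.
have [st|nst] := pselect (stationary (act u)); first by exists u.
have [u1 Fu1 proper_u1] := act_grow nst.
have [|u2 Fu2 st2] := IH u1; last by exists u2 => //; exact: le_trans Fu1.
have : (#|act u1| <= #|K|)%N by exact: max_card.
by have := proper_card proper_u1; lia.
Qed.

Lemma stationary_act_const u v : act u = act v -> stationary (act u) -> F u = F v.
Proof.
move=> uv st; have [k ku] := act_nonempty u.
have slope i : i \in act u -> dot (a i) (v - u) = F v - F u.
  move=> iu; have iv : i \in act v by rewrite -uv.
  by move: iu iv; rewrite !inE -affineB => /eqP <- /eqP <-.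
have tied i : i \in act u -> dot (a i) (v - u) = dot (a k) (v - u).
  by move=> iu; rewrite !slope.
have tiedN i : i \in act u -> dot (a i) (- (v - u)) = dot (a k) (- (v - u)).
  by move=> iu; rewrite !dotN tied.
have := st _ _ ku tied; have := st _ _ ku tiedN.
by rewrite dotN (slope k ku); lra.
Qed.

(* [F] is constant on each stationary activity class, and every value of [F] is
   bounded below by one of these finitely many constants. *)
Lemma max_affine_min : exists w0, forall u, F w0 <= F u.
Proof.
have /choice [rep repP] : forall A, exists u, (exists v, act v = A) -> act u = A.
  move=> A; have [[v vA]|nA] := pselect (exists v, act v = A); first by exists v.
  by exists 0 => /nA.
pose P A := `[< (exists v, act v = A) /\ stationary A >].
have [u0 _ st0] := exists_stationary_below 0.
have P0 : P (act u0) by apply/asboolP; split => //; exists u0.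
have [A _ minA] := arg_minP (F \o rep) P0.
exists (rep A) => u; have [u' Fu' st'] := exists_stationary_below u.
have rep_act : act (rep (act u')) = act u' by apply: repP; exists u'.
have Frep : F (rep (act u')) = F u' by apply: stationary_act_const; rewrite rep_act.
apply: le_trans Fu'; rewrite -Frep; apply: (minA (act u')).
by apply/asboolP; split => //; exists u'.
Qed.

End BoundedBelow.

Definition cone A := [set z | forall k, k \in A -> dot (a k) z <= 0].

Definition excess A z : R := \sum_(k in A) Num.max 0 (dot (a k) z).

Definition far A e := forall z, cone A z -> `|e| <= `|e - z|.

Lemma maxr0_subr_le (x y : R) : Num.max 0 x - Num.max 0 y <= `|x - y|.
Proof.
have := ler_norm (x - y); have := ler_norm (y - x); rewrite distrC.
by case: (leP 0 x) => x0; case: (leP 0 y) => y0; lra.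
Qed.

Lemma excess_continuous A : continuous (excess A).
Proof.
apply: (@lipschitz_continuous _ _ _ (#|A|%:R * lip_const)).
  by rewrite mulr_ge0 // lip_const_ge0.
move=> u v; rewrite /excess -sumrB -mulrA mulr_natl -sumr_const; apply: ler_sum => k _.
by apply: le_trans (maxr0_subr_le _ _) _; rewrite -dotB normr_dot_le_lip.
Qed.

Lemma excessZ A c e : 0 <= c -> excess A (c *: e) = c * excess A e.
Proof.
move=> c_ge0; rewrite /excess mulr_sumr; apply: eq_bigr => k _.
by rewrite dotZ -{1}(mulr0 c) maxr_pMr.
Qed.

Lemma excess_ge0 A e : 0 <= excess A e.
Proof. by apply: sumr_ge0 => k _; rewrite le_max lexx. Qed.

Lemma far_scale A c e : 0 < c -> far A e -> far A (c *: e).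
Proof.
move=> c_gt0 far_e z cz.
have cz' : cone A (c^-1 *: z).
  by move=> k kA; rewrite dotZ; apply: mulr_ge0_le0; [rewrite invr_ge0 ltW | exact: cz].
have -> : c *: e - z = c *: (e - c^-1 *: z).
  by rewrite scalerBr scalerA divff ?gt_eqF // scale1r.
by rewrite !normrZ ler_wpM2l ?far_e.
Qed.

Lemma excess_gt0 A e : far A e -> e != 0 -> 0 < excess A e.
Proof.
move=> far_e e_neq0.
have [k kA dot_gt0] : exists2 k, k \in A & 0 < dot (a k) e.
  apply: contrapT => no_k; move/negP: e_neq0; apply.
  have := far_e e; rewrite subrr normr0 -normr_eq0 eq_le normr_ge0 andbT; apply=> k kA.
  by rewrite leNgt; apply/negP => ?; apply: no_k; exists k.
rewrite /excess (bigD1 k) //=; apply: (@lt_le_trans _ _ (Num.max 0 (dot (a k) e))).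
  by rewrite lt_max dot_gt0 orbT.
by rewrite lerDl; apply: sumr_ge0 => j _; rewrite le_max lexx.
Qed.

Lemma excess_lb : exists2 c, 0 < c & forall A e, far A e -> c * `|e| <= excess A e.
Proof.
have [|A|c c_gt0 unit_lb] :=
  @fin_uniform_pos _ _ (fun A c => forall e, `|e| = 1 -> far A e -> c <= excess A e).
- by move=> A c c' /andP[_ c'c] lb e e1 far_e; exact: le_trans c'c (lb e e1 far_e).
- have S_closed : closed [set e | `|e| = 1 /\ far A e].
    rewrite (_ : [set e | _ /\ _] =
      [set e | `|e| = 1] `&` \bigcap_(z in cone A) [set e | 1 <= `|z - e|]).
      apply: closedI; first exact/closed_fun_eq/norm_continuous.
      by apply: closed_bigI => z _; exact/closed_fun_ge/normB_continuous.
    apply/seteqP; split=> e /= [e1 far_e]; split=> // z cz.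
      by rewrite /= distrC -e1; exact: far_e.
    by rewrite e1 distrC; exact: far_e.
  have [e [e1 _]|e [e1 far_e]|c c_gt0 lb] :=
    compact_pos_lb (B := 1) S_closed _ (@excess_continuous A).
  + by rewrite e1.
  + by apply: excess_gt0 far_e _; rewrite -normr_eq0 e1 oner_neq0.
  + by exists c => // e e1 far_e; apply: lb.
- exists c => // A e far_e; have [->|e_neq0] := eqVneq e 0.
    by rewrite normr0 mulr0 excess_ge0.
  have ne_gt0 : 0 < `|e| by rewrite normr_gt0.
  have e1 : `| `|e|^-1 *: e| = 1 by rewrite normrZ normfV normr_id mulVf ?normr_eq0.
  have ne_inv_gt0 : 0 < `|e|^-1 by rewrite invr_gt0.
  have := unit_lb A _ e1 (far_scale ne_inv_gt0 far_e).
  by rewrite excessZ ?invr_ge0 // ler_pdivlMl // mulrC.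
Qed.

Section SharpMinimum.
Variable w0 : 'rV[R]_d.
Hypothesis F_w0_min : forall u, F w0 <= F u.

(* Moving from a point [w] of the argmin into [cone (act w)] stays in the argmin for a
   while, so a nearest point of the argmin makes [u - w] far from that cone. *)
Lemma argmin_nearest_far u w : F w = F w0 ->
  (forall w', F w' = F w0 -> `|u - w| <= `|u - w'|) -> far (act w) (u - w).
Proof.
move=> Fw nearest z cz; have [t /andP[t_gt0 t_le1] Ft] := act_cone_descent cz.
have : `|u - w| <= `|u - (w + t *: z)|.
  by apply: nearest; apply/le_anti; rewrite F_w0_min -Fw Ft.
have -> : u - (w + t *: z) = (1 - t) *: (u - w) + t *: (u - w - z).
  by apply/rowP => i; rewrite !mxE; ring.
have t_ge0 := ltW t_gt0.
move/le_trans/(_ (ler_normD _ _)); rewrite !normrZ !ger0_norm ?subr_ge0 // => near_ineq.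
by rewrite -(ler_pM2l t_gt0); lra.
Qed.

Lemma excess_act_le u w : F w = F w0 -> excess (act w) (u - w) <= #|K|%:R * (F u - F w0).
Proof.
move=> Fw; apply: (@le_trans _ _ (\sum_(k in act w) (F u - F w0))).
  apply: ler_sum => k kw; rewrite ge_max subr_ge0 F_w0_min -affineB.
  by move: kw; rewrite inE Fw => /eqP ->; rewrite lerD2r F_ge.
rewrite sumr_const mulr_natl; apply: ler_wpMn2l; first by rewrite subr_ge0.
exact: max_card.
Qed.

Lemma max_affine_sharp : exists2 c, 0 < c &
  forall u, exists2 w, F w = F w0 & c * `|u - w| <= F u - F w0.
Proof.
have [c c_gt0 excess_ge] := excess_lb.
have K1_gt0 : 0 < #|K|%:R + 1 :> R by rewrite ltr_wpDl.
exists (c / (#|K|%:R + 1)) => [|u]; first exact: divr_gt0.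
have argmin_closed : closed [set w | F w = F w0].
  exact/closed_fun_eq/max_affine_continuous.
have [w /= Fw nearest] := closed_nearest u argmin_closed (ex_intro _ w0 erefl).
exists w => //; have := excess_ge _ _ (argmin_nearest_far Fw nearest).
move/le_trans/(_ (excess_act_le u Fw)); have := F_w0_min u.
by rewrite mulrAC ler_pdivrMr //; nra.
Qed.

End SharpMinimum.

End MaxAffine.

Section NormEquivalence.
Variables (R : realType) (d : nat) (nrm : 'rV[R]_d -> R).
Hypothesis nrm_norm : is_norm nrm.
Implicit Types (u v : 'rV[R]_d).

Let nrm_ge0 u : 0 <= nrm u. Proof. by case: nrm_norm. Qed.
Let nrmZ c u : nrm (c *: u) = `|c| * nrm u. Proof. by case: nrm_norm => _ [_ []]. Qed.
Let nrmD u v : nrm (u + v) <= nrm u + nrm v. Proof. by case: nrm_norm => _ [_ []]. Qed.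

Let nrm0 : nrm 0 = 0.
Proof. by rewrite -(scale0r 0) nrmZ normr0 mul0r. Qed.

Lemma nrm_sum (I : Type) (r : seq I) (f : I -> 'rV[R]_d) :
  nrm (\sum_(i <- r) f i) <= \sum_(i <- r) nrm (f i).
Proof.
elim: r => [|i r IH]; first by rewrite !big_nil nrm0.
by rewrite !big_cons; apply: le_trans (nrmD _ _) _; rewrite lerD2l.
Qed.

Definition nrm_const : R := \sum_(j < d) nrm (delta_mx 0 j).

Lemma nrm_const_ge0 : 0 <= nrm_const.
Proof. exact: sumr_ge0. Qed.

Lemma nrm_le u : nrm u <= nrm_const * `|u|.
Proof.
rewrite {1}(row_sum_delta u); apply: le_trans (nrm_sum _ _) _.
rewrite /nrm_const mulr_suml; apply: ler_sum => j _; rewrite nrmZ mulrC.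
by rewrite ler_wpM2l // normr_entry_le.
Qed.

Lemma nrm_continuous : continuous nrm.
Proof.
apply: lipschitz_continuous nrm_const_ge0 _ => u v.
by rewrite lerBlDr -{1}(subrK v u); apply: le_trans (nrmD _ _) _; rewrite lerD2r nrm_le.
Qed.

Lemma normr_le_nrm : exists2 C, 0 < C & forall u, `|u| <= C * nrm u.
Proof.
have sphere_closed : closed [set u : 'rV[R]_d | `|u| = 1].
  exact/closed_fun_eq/norm_continuous.
have [u /= u1|u /= u1|c c_gt0 c_le] :=
  compact_pos_lb (B := 1) sphere_closed _ nrm_continuous; first by rewrite u1.
  case: nrm_norm => _ [nrm_eq0 _]; rewrite lt_neqAle nrm_ge0 andbT eq_sym.
  by apply/eqP => /nrm_eq0 u0; move: u1; rewrite u0 normr0 => /eqP; rewrite eq_sym oner_eq0.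
exists c^-1; first by rewrite invr_gt0.
move=> u; have [->|u_neq0] := eqVneq u 0; first by rewrite normr0 nrm0 mulr0.
have nu_gt0 : 0 < `|u| by rewrite normr_gt0.
have u1 : `| `|u|^-1 *: u| = 1 by rewrite normrZ normfV normr_id mulVf ?normr_eq0.
have := c_le _ u1; rewrite nrmZ normfV normr_id.
by rewrite ler_pdivlMl // -ler_pdivrMl ?invr_gt0 // invrK mulrC.
Qed.

End NormEquivalence.

Lemma polyhedral_pieces (R : realType) (Y : finType) (d : nat) (L : 'rV[R]_d -> Y -> R) :
  polyhedral L -> exists N (piece : Y -> 'I_N -> 'rV[R]_d * R),
    (forall y i u, affine (piece y i) u <= L u y) /\
    (forall y u, exists i, affine (piece y i) u = L u y).
Proof.
move=> [_ /choice[s s_max]]; pose N := (\max_y size (s y))%N.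
(* Indices beyond [size (s y)] repeat the head of [s y], which is nonempty. *)
pose piece y (i : 'I_N) := nth (head (0, 0) (s y)) (s y) i.
have piece_in y i : piece y i \in s y.
  have [sy_neq0 _] := s_max y; rewrite /piece.
  have [lt_i|le_i] := ltnP i (size (s y)); first exact: mem_nth.
  by rewrite nth_default //; case: (s y) sy_neq0 => // x t _; exact: mem_head.
exists N, piece; split=> [y i u|y u]; first by have [_ /(_ u)[+ _]] := s_max y; apply.
have [_ /(_ u)[_ [ab ab_in ab_max]]] := s_max y.
have lt_iN : (index ab (s y) < N)%N.
  by rewrite (leq_trans _ (@leq_bigmax _ (fun y => size (s y)) y)) // index_mem.
by exists (Ordinal lt_iN); rewrite /piece /= nth_index.
Qed.

Section PolyhedralLoss.
Variables (R : realType) (Y : finType) (d : nat) (L : 'rV[R]_d -> Y -> R).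
Variables (N : nat) (piece : Y -> 'I_N -> 'rV[R]_d * R).
Hypotheses (piece_ge : forall y i u, affine (piece y i) u <= L u y)
  (piece_ex : forall y u, exists i, affine (piece y i) u = L u y).
Implicit Types (p : Y -> R) (u v : 'rV[R]_d).

Definition exp_piece p (s : {ffun Y -> 'I_N}) : 'rV[R]_d * R :=
  (\sum_y p y *: (piece y (s y)).1, \sum_y p y * (piece y (s y)).2).

Lemma exp_pieceE p s u : affine (exp_piece p s) u = \sum_y p y * affine (piece y (s y)) u.
Proof.
rewrite affineE dot_suml -big_split; apply: eq_bigr => y _.
by rewrite dotZl affineE mulrDr.
Qed.

Lemma exp_piece_le p : (forall y, 0 <= p y) ->
  forall s u, affine (exp_piece p s) u <= exp_loss L p u.
Proof. by move=> p_ge0 s u; rewrite exp_pieceE; apply: ler_sum => y _; rewrite ler_wpM2l. Qed.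

Lemma exp_piece_ex p u : exists s, affine (exp_piece p s) u = exp_loss L p u.
Proof.
have /choice [s s_max] := fun y => piece_ex y u.
by exists [ffun y => s y]; rewrite exp_pieceE; apply: eq_bigr => y _; rewrite ffunE s_max.
Qed.

Definition pattern u : {ffun Y -> {set 'I_N}} := [ffun y => act (piece y) (L^~ y) u].

(* Slightly past [u] on the line from [u'], every [L _ y] is still affine, so the
   expected loss would drop below its optimal value at [u] unless its value at [u'] is
   no larger. *)
Lemma prop_pattern p u u' : (forall y, 0 <= p y) ->
  pattern u = pattern u' -> prop L p u -> prop L p u'.
Proof.
move=> p_ge0 uu' opt_u w.
pose P y t := forall s, 0 <= s <= t ->
  L (u + s *: (u - u')) y = L u y + s * (L u y - L u' y).
have [|y|t t_gt0 extrapolate] := @fin_uniform_pos _ _ P.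
- by move=> y t t' /andP[_ t't] Pt s /andP[s_ge0 st']; apply: Pt; rewrite s_ge0 (le_trans st').
- apply: (act_eq_extrapolate (piece_ge y) (piece_ex y)).
  by have := congr1 (fun f : {ffun Y -> {set 'I_N}} => f y) uu'; rewrite !ffunE.
have := opt_u (u + t *: (u - u')).
have -> : exp_loss L p (u + t *: (u - u')) =
    exp_loss L p u + t * (exp_loss L p u - exp_loss L p u').
  rewrite /exp_loss -sumrB mulr_sumr -big_split; apply: eq_bigr => y _.
  by rewrite /= extrapolate ?lexx ?ltW //; ring.
by rewrite lerDl pmulr_rge0 // subr_ge0 => /le_trans; apply.
Qed.

End PolyhedralLoss.

Section ExtendedInf.
Variable R : realType.

Lemma ereal_inf_ge_fin (T : Type) (B : set T) (f : T -> R) x :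
  (forall t, B t -> x <= f t) -> (x%:E <= ereal_inf [set (f t)%:E | t in B])%E.
Proof. by move=> f_ge; apply/ereal_infP => _ [t Bt <-]; rewrite lee_fin f_ge. Qed.

Lemma ereal_inf_image_min (T : Type) (f : T -> R) t0 : (forall t, f t0 <= f t) ->
  ereal_inf [set (f t)%:E | t in [set: T]] = (f t0)%:E.
Proof.
move=> f_min; apply/le_anti; rewrite ereal_inf_ge_fin ?andbT //.
by apply: ereal_inf_lbound; exists t0.
Qed.

Lemma ereal_inf_gap (T : Type) (B : set T) (f : T -> R) x :
  (x%:E < ereal_inf [set (f t)%:E | t in B])%E ->
  exists2 g, 0 < g & forall t, B t -> x + g <= f t.
Proof.
have inf_le t : B t -> (ereal_inf [set (f t)%:E | t in B] <= (f t)%:E)%E.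
  by move=> Bt; apply: ereal_inf_lbound; exists t.
case: (ereal_inf _) inf_le => [b||] inf_le; last by rewrite ltNge leNye.
- rewrite lte_fin => xb; exists (b - x) => [|t Bt]; first by rewrite subr_gt0.
  by rewrite addrC subrK -lee_fin inf_le.
- by exists 1 => // t /inf_le.
Qed.

End ExtendedInf.

Section Calibration.
Variables (R : realType) (Y Rep : finType) (d : nat) (L : 'rV[R]_d -> Y -> R)
  (l : Rep -> Y -> R) (nrm : 'rV[R]_d -> R) (psi : 'rV[R]_d -> Rep).
Variables (N : nat) (piece : Y -> 'I_N -> 'rV[R]_d * R).
Hypotheses (piece_ge : forall y i u, affine (piece y i) u <= L u y)
  (piece_ex : forall y u, exists i, affine (piece y i) u = L u y)
  (L_ge0 : forall u y, 0 <= L u y) (nrm_norm : is_norm nrm).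
Implicit Types (p : Y -> R) (u w : 'rV[R]_d).

Let simplex_ge0 p : simplex p -> forall y, 0 <= p y. Proof. by case. Qed.

Let exp_loss_ge0 p : simplex p -> forall u, 0 <= exp_loss L p u.
Proof. by move=> sp u; apply: sumr_ge0 => y _; apply: mulr_ge0; [exact: simplex_ge0|]. Qed.

Lemma exp_loss_min p : simplex p -> exists w0, forall u, exp_loss L p w0 <= exp_loss L p u.
Proof.
move=> sp; exact: (max_affine_min (exp_piece_le piece_ge (simplex_ge0 sp))
  (exp_piece_ex piece_ex p) (exp_loss_ge0 sp)).
Qed.

Lemma calibrated_elicits : calibrated L l psi -> indirectly_elicits L (prop l).
Proof.
move=> cal u; exists (psi u) => p [sp opt_u]; split=> //; apply: contrapT => bad.
have := cal p sp; rewrite (ereal_inf_image_min opt_u) ltNge => /negP; apply.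
by apply: ereal_inf_lbound; exists u.
Qed.

(* Calibration gives a gap [g] above the optimal loss outside the correct reports; the
   Lipschitz expected loss stays below it near its argmin. *)
Lemma calibrated_near_opt p : calibrated L l psi -> simplex p ->
  exists2 e, 0 < e & forall u w, Gam L p w -> nrm (w - u) < e -> prop l p (psi u).
Proof.
move=> cal sp; have [w0 min_w0] := exp_loss_min sp.
have := cal p sp; rewrite (ereal_inf_image_min min_w0) => /ereal_inf_gap[g g_gt0 gap].
have [C C_gt0 normr_le] := normr_le_nrm nrm_norm.
pose K := lip_const (exp_piece piece p).
have K_ge0 : 0 <= K := lip_const_ge0 _.
have KC1_gt0 : 0 < K * C + 1 by rewrite ltr_wpDl // mulr_ge0 // ltW.
exists (g / (K * C + 1)) => [|u w opt_w wu]; first exact: divr_gt0.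
apply: contrapT => /gap; apply/negP; rewrite -ltNge.
have := max_affine_lipschitz (exp_piece_le piece_ge (simplex_ge0 sp))
  (exp_piece_ex piece_ex p) u w; rewrite -/K.
have := normr_le (w - u); rewrite distrC => uw_le.
have : K * `|u - w| <= K * C * (g / (K * C + 1)).
  by rewrite -mulrA ler_wpM2l // (le_trans uw_le) // ler_wpM2l // ltW.
have : K * C * (g / (K * C + 1)) < g by rewrite mulrCA gtr_pMr // ltr_pdivrMr //; lra.
by have := opt_w w0; lra.
Qed.

Definition pattern_class (A : {set {ffun Y -> {set 'I_N}}}) : set 'rV[R]_d :=
  [set u | pattern L piece u \in A].

Lemma Ucal_pattern_class U : Ucal L U -> exists A, U = pattern_class A.
Proof.
move=> [p sp <-].
exists [set a | `[< exists2 u, Gam L p u & pattern L piece u = a >]]%SET.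
apply/seteqP; split=> u; rewrite /pattern_class /= inE.
  by move=> opt_u; apply/asboolP; exists u.
move=> /asboolP[u0 opt_u0 u0u].
exact (prop_pattern piece_ge piece_ex (simplex_ge0 sp) u0u opt_u0).
Qed.

Lemma calibrated_avoid_radius U r : calibrated L l psi -> ~ R_U L (prop l) U r ->
  exists2 e, 0 < e & forall u w, U w -> nrm (w - u) < e -> psi u <> r.
Proof.
move=> cal notR.
have [p [[sp GamU] not_r]] : exists p, Gam_U L U p /\ ~ level_set (prop l) r p.
  apply: contrapT => all_r; apply: notR => p Up.
  by apply: contrapT => ?; apply: all_r; exists p.
have [e e_gt0 near_opt] := calibrated_near_opt cal sp.
exists e => // u w Uw wu psi_r; apply: not_r; split=> //; rewrite -psi_r.
by apply: near_opt wu; rewrite GamU.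
Qed.

Lemma calibrated_thickened_link : calibrated L l psi ->
  exists eps, 0 < eps /\ thickened_link L (prop l) eps nrm psi.
Proof.
move=> cal.
pose P (Ar : {set {ffun Y -> {set 'I_N}}} * Rep) e :=
  ~ R_U L (prop l) (pattern_class Ar.1) Ar.2 ->
  forall u w, pattern_class Ar.1 w -> nrm (w - u) < e -> psi u <> Ar.2.
have [|[A r]|eps eps_gt0 avoid] := @fin_uniform_pos _ _ P.
- move=> Ar e e' /andP[_ e'e] Pe notR u w Uw wu.
  exact: Pe notR u w Uw (lt_le_trans wu e'e).
- rewrite /P /=; have [RA|notR] := pselect (R_U L (prop l) (pattern_class A) r).
    by exists 1 => // /(_ RA).
  by have [e e_gt0 avoid] := calibrated_avoid_radius cal notR; exists e.
exists eps; split=> //; split=> [|u U UA]; first exact: calibrated_elicits.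
have [A ->] := Ucal_pattern_class UA => /ereal_inf_lt[_ [w Uw <-]].
rewrite lte_fin => wu; apply: contrapT => notR.
exact: avoid (A, psi u) notR u w Uw wu erefl.
Qed.

Lemma exp_loss_sharp p : simplex p -> exists2 c, 0 < c & forall u,
  exists2 w, Gam L p w & c * nrm (w - u) <= exp_loss L p u - exp_loss L p w.
Proof.
move=> sp; have [w0 min_w0] := exp_loss_min sp.
have [c c_gt0 sharp] := max_affine_sharp (exp_piece_le piece_ge (simplex_ge0 sp))
  (exp_piece_ex piece_ex p) min_w0.
have C1_gt0 : 0 < nrm_const nrm + 1 by rewrite ltr_wpDl // nrm_const_ge0.
exists (c / (nrm_const nrm + 1)) => [|u]; first exact: divr_gt0.
have [w w_min uw_le] := sharp u; exists w; first by move=> v; rewrite w_min.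
have nrm_wu : nrm (w - u) <= (nrm_const nrm + 1) * `|u - w|.
  apply: le_trans (nrm_le nrm_norm _) _; rewrite distrC ler_wpM2r //.
  by rewrite lerDl.
rewrite w_min; apply: le_trans uw_le.
by rewrite mulrAC ler_pdivrMr // -mulrA ler_pM2l // mulrC.
Qed.

Lemma thickened_link_calibrated eps : 0 < eps ->
  thickened_link L (prop l) eps nrm psi -> calibrated L l psi.
Proof.
move=> eps_gt0 [_ link] p sp; have [w0 min_w0] := exp_loss_min sp.
have [c c_gt0 sharp] := exp_loss_sharp sp.
rewrite (ereal_inf_image_min min_w0); apply: (@lt_le_trans _ _ (exp_loss L p w0 + c * eps)%:E).
  by rewrite lte_fin ltrDl mulr_gt0.
apply: ereal_inf_ge_fin => u /= bad; rewrite leNgt; apply/negP => small.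
have [w opt_w wu] := sharp u.
have {}wu : nrm (w - u) < eps.
  by rewrite -(ltr_pM2l c_gt0); apply: le_lt_trans wu _; have := min_w0 w; lra.
have : R_U L (prop l) (Gam L p) (psi u).
  apply: link; first by exists p.
  apply: (@le_lt_trans _ _ (nrm (w - u))%:E); last by rewrite lte_fin.
  by apply: ereal_inf_lbound; exists w.
by move=> /(_ p (conj sp erefl))[].
Qed.

End Calibration.

Theorem theorem9 (R : realType) (Y Rep : finType) (d : nat)
  (L : 'rV[R]_d -> Y -> R) (l : Rep -> Y -> R) (nrm : 'rV[R]_d -> R)
  (psi : 'rV[R]_d -> Rep) :
  polyhedral L -> discrete_loss l -> is_norm nrm ->
  (calibrated L l psi <->
   exists eps : R, 0 < eps /\ thickened_link L (prop l) eps nrm psi).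
Proof.
move=> L_poly _ nrm_norm; have [N [piece [piece_ge piece_ex]]] := polyhedral_pieces L_poly.
split=> [|[eps [eps_gt0 link]]].
  exact: calibrated_thickened_link piece_ge piece_ex L_poly.1 nrm_norm.
exact (thickened_link_calibrated piece_ge piece_ex L_poly.1 nrm_norm eps_gt0 link).
Qed.
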